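(* Let $n\geq 2$ be an integer, and for $\alpha\in\mathbb{Q}$ let $s_{n,\alpha}=1+i\frac{\pi\alpha}{\log n}$. Then $\{\kappa_{s_{n,\alpha}}\}_{\alpha\in\mathbb{Q}}$ spans a dense subspace of $H^2$.
   Context: $H^2$ denotes the Hardy space of analytic functions $f(z)=\sum_{k\ge0}\hat f(k)z^k$ on the open unit disk with $\sum_{k}|\hat f(k)|^2<\infty$. For $s\in\mathbb{C}\setminus\{0\}$ set $\varphi_0(s)=-\frac1s$ and $\varphi_k(s)=-\frac1s\left((k+1)^{1-s}-k^{1-s}\right)$ for $k\geq1$. For $\Re s>1/2$ the zeta kernel is $\kappa_s(z)=\sum_{k=0}^\infty\varphi_k(\bar s)z^k\in H^2$; equivalently $\langle f,\kappa_s\rangle=\Lambda^{(s)}(f)$ where $\Lambda^{(s)}$ is the bounded linear functional on $H^2$ with $\Lambda^{(s)}(z^k)=\varphi_k(s)$. *)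

From Stdlib Require Import Reals QArith List.
From Coquelicot Require Import Coquelicot.
Open Scope R_scope.

(* Complex power x^w = exp(w * ln x) for a real base x > 0, written out:
   x^w = x^(Re w) * (cos (Im w * ln x) + i sin (Im w * ln x)). *)
Definition cpow_pos (x : R) (w : C) : C :=
  (Rpower x (Re w) * cos (Im w * ln x), Rpower x (Re w) * sin (Im w * ln x)).

Definition phi (k : nat) (s : C) : C :=
  match k with
  | O => Copp (Cinv s)
  | S _ => Cmult (Copp (Cinv s))
             (Cminus (cpow_pos (INR (S k)) (Cminus (RtoC 1) s))
                     (cpow_pos (INR k) (Cminus (RtoC 1) s)))
  end.

(* Taylor coefficients of the zeta kernel kappa_s(z) = sum_k phi_k(conj s) z^k *)
Definition kappa (s : C) (k : nat) : C := phi k (Cconj s).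

(* H^2 identified with square-summable coefficient sequences. *)
Definition inH2 (f : nat -> C) : Prop := ex_series (fun k => (Cmod (f k))^2).

Definition s_na (n : nat) (a : Q) : C := (1, PI * Q2R a / ln (INR n)).

Definition lincomb (n : nat) (L : list (C * Q)) (k : nat) : C :=
  fold_right (fun p acc => Cplus (Cmult (fst p) (kappa (s_na n (snd p)) k)) acc)
             (RtoC 0) L.

From Stdlib Require Import Reals QArith ZArith List Lia Lra.
From Coquelicot Require Import Coquelicot.
Open Scope R_scope.

(* Write t = pi alpha / log n, so that conj s_{n,alpha} = 1 - i t and
   phi_k(1 - i t) = -(1 - i t)^-1 (e^{i t log (k+1)} - e^{i t log k}).  Hence a
   combination of the kernels kappa_{s_{n,alpha_j}} with weights c_j (1 - i t_j)
   has, up to sign, the coefficients T(log (k+1)) - T(log k), where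
   T(y) = sum_j c_j e^{i t_j y} is a trigonometric polynomial with frequencies in
   (pi / log n) Q (and T(log 0) is read as 0).  Among such T are the powers G^M of
   the bump G(y) = (1 + cos (beta (y - log (m+1)))) / 2, beta = pi / (p log n):
   G^M is 1 at log (m+1), at most ((1 + cos (beta / (m+2))) / 2)^M at every other
   log k with k <= n^p, and moves by at most M beta / (2k) between log k and
   log (k+1).  With M of order p^3 and p large, the resulting combination is
   arbitrarily close to e_m - e_{m+1} in H^2.  As kappa_1 = -e_0, every unit
   vector, hence every finitely supported sequence, hence (by truncation) every
   f in H^2 is a limit of such combinations. *)

Lemma abs_sin_le x : Rabs (sin x) <= Rabs x.
Proof.
  assert (Hpos : forall y, 0 < y -> Rabs (sin y) <= y).
  { intros y Hy; pose proof (sin_lt_x y Hy); apply Rabs_le; split; [|lra].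
    destruct (Rle_dec y 1); [|pose proof (SIN_bound y); lra].
    assert (0 <= sin y) by (apply sin_ge_0; pose proof PI2_3_2; lra); lra. }
  destruct (Rtotal_order x 0) as [H|[->|H]].
  - rewrite <- (Ropp_involutive x), sin_neg, !Rabs_Ropp, (Rabs_left x) by lra.
    apply Hpos; lra.
  - rewrite sin_0, Rabs_R0; lra.
  - rewrite (Rabs_pos_eq x) by lra; apply Hpos; lra.
Qed.

Lemma cos_lipschitz u v : Rabs (cos u - cos v) <= Rabs (u - v).
Proof.
  rewrite form2, !Rabs_mult, Rabs_left by lra.
  pose proof (abs_sin_le ((u - v) / 2)).
  assert (Rabs (sin ((u + v) / 2)) <= 1) by (apply Rabs_le, SIN_bound).
  replace (Rabs (u - v)) with (2 * Rabs ((u - v) / 2))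
    by (unfold Rdiv; rewrite Rabs_mult, (Rabs_pos_eq (/ 2)) by lra; field).
  pose proof (Rabs_pos (sin ((u - v) / 2))); pose proof (Rabs_pos (sin ((u + v) / 2))).
  nra.
Qed.

Lemma pow_unit_interval x M : 0 <= x <= 1 -> 0 <= x ^ M <= 1.
Proof.
  intro Hx; split; [apply pow_le; lra|].
  rewrite <- (pow1 M); apply pow_incr; lra.
Qed.

Lemma pow_lipschitz a b M : 0 <= a <= 1 -> 0 <= b <= 1 ->
  Rabs (a ^ M - b ^ M) <= INR M * Rabs (a - b).
Proof.
  intros Ha Hb; induction M as [|M IH].
  - simpl; rewrite Rminus_diag, Rabs_R0; lra.
  - replace (a ^ S M - b ^ S M) with (a * (a ^ M - b ^ M) + b ^ M * (a - b))
      by (simpl; ring).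
    pose proof (pow_unit_interval b M Hb).
    eapply Rle_trans; [apply Rabs_triang|].
    rewrite !Rabs_mult, (Rabs_pos_eq a), (Rabs_pos_eq (b ^ M)), S_INR by lra.
    pose proof (Rabs_pos (a ^ M - b ^ M)); pose proof (Rabs_pos (a - b)); nra.
Qed.

Lemma half_one_plus_cos_le t : 0 <= t <= 1 -> (1 + cos t) / 2 <= 1 - t ^ 2 / 16.
Proof.
  intro Ht; replace t with (2 * (t / 2)) at 1 by field; rewrite cos_2a_sin.
  (* [sin a >= a - a^3/6 >= a/2] on [0, 1] *)
  assert (Hsin : t / 4 <= sin (t / 2)).
  { pose proof (sin_bound (t / 2) 0 ltac:(lra) ltac:(pose proof PI2_3_2; lra)) as [H _].
    unfold sin_approx, sin_term in H; simpl in H; nra. }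
  simpl; nra.
Qed.

Lemma exp_pow x N : exp x ^ N = exp (INR N * x).
Proof.
  induction N as [|N IH]; simpl pow.
  - rewrite Rmult_0_l, exp_0; reflexivity.
  - rewrite IH, <- exp_plus, S_INR; f_equal; ring.
Qed.

Lemma exp_le_compat x y : x <= y -> exp x <= exp y.
Proof.
  intro H; destruct (Rle_lt_or_eq_dec x y H) as [Hlt | ->];
    [apply Rlt_le, exp_increasing | apply Rle_refl]; exact Hlt.
Qed.

Lemma pow_one_sub_le_exp u N : 0 <= u <= 1 -> (1 - u) ^ N <= exp (- (INR N * u)).
Proof.
  intro Hu; replace (- (INR N * u)) with (INR N * - u) by ring.
  rewrite <- exp_pow; apply pow_incr; pose proof (exp_ineq1_le (- u)); lra.
Qed.

Lemma pow_div_le_exp x j : 0 <= x -> (1 <= j)%nat -> (x / INR j) ^ j <= exp x.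
Proof.
  intros Hx Hj; assert (0 < INR j) by (apply lt_0_INR; lia).
  replace (exp x) with (exp (x / INR j) ^ j) by (rewrite exp_pow; f_equal; field; lra).
  apply pow_incr; split; [apply Rdiv_le_0_compat; lra|].
  pose proof (exp_ineq1_le (x / INR j)); lra.
Qed.

Lemma ln_le_sub_1 x : 0 < x -> ln x <= x - 1.
Proof.
  intro Hx; rewrite <- (ln_exp (x - 1)).
  apply ln_le; [exact Hx|]; pose proof (exp_ineq1_le (x - 1)); lra.
Qed.

Lemma ln_sub_bounds a b : 0 < a -> 0 < b -> (b - a) / b <= ln b - ln a <= (b - a) / a.
Proof.
  intros Ha Hb.
  pose proof (ln_le_sub_1 (a / b) (Rdiv_lt_0_compat _ _ Ha Hb)).
  pose proof (ln_le_sub_1 (b / a) (Rdiv_lt_0_compat _ _ Hb Ha)).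
  rewrite ln_div in * by lra.
  replace ((b - a) / b) with (- (a / b - 1)) by (field; lra).
  replace ((b - a) / a) with (b / a - 1) by (field; lra).
  lra.
Qed.

Lemma ln_nat_separated j m : (1 <= j)%nat -> j <> S m ->
  1 / (INR m + 2) <= Rabs (ln (INR j) - ln (INR (S m))).
Proof.
  intros Hj Hjm.
  assert (Hj1 : 1 <= INR j) by (apply (le_INR 1); exact Hj).
  pose proof (pos_INR m); rewrite S_INR.
  assert (0 < 1 / (INR m + 2)) by (apply Rdiv_lt_0_compat; lra).
  pose proof (ln_sub_bounds (INR j) (INR m + 1)) as [Hlo _]; try lra.
  pose proof (ln_sub_bounds (INR m + 1) (INR j)) as [Hlo' _]; try lra.
  destruct (Nat.lt_ge_cases j (S m)) as [Hlt|Hge].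
  - assert (Hle : INR (S j) <= INR (S m)) by (apply le_INR; lia).
    rewrite !S_INR in Hle.
    assert (1 / (INR m + 2) <= (INR m + 1 - INR j) / (INR m + 1)).
    { apply Rle_trans with (1 / (INR m + 1));
        [apply Rmult_le_compat_l, Rinv_le_contravar | apply Rmult_le_compat_r]; try lra.
      apply Rlt_le, Rinv_0_lt_compat; lra. }
    rewrite Rabs_minus_sym, Rabs_pos_eq; lra.
  - assert (Hle : INR (S (S m)) <= INR j) by (apply le_INR; lia).
    rewrite !S_INR in Hle.
    assert (1 / (INR m + 2) <= (INR j - (INR m + 1)) / INR j).
    { unfold Rdiv; rewrite Rmult_1_l.
      apply Rmult_le_reg_r with ((INR m + 2) * INR j); [nra|].
      field_simplify; nra. }
    rewrite Rabs_pos_eq; lra.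
Qed.

Lemma ln_succ_sub_le k : (1 <= k)%nat ->
  0 <= ln (INR (S k)) - ln (INR k) <= 1 / INR k.
Proof.
  intro Hk; assert (1 <= INR k) by (apply (le_INR 1); exact Hk).
  rewrite S_INR; pose proof (ln_sub_bounds (INR k) (INR k + 1)) as B.
  replace (INR k + 1 - INR k) with 1 in B by ring.
  assert (0 < 1 / (INR k + 1)) by (apply Rdiv_lt_0_compat; lra).
  specialize (B ltac:(lra) ltac:(lra)); lra.
Qed.

Lemma is_series_bounded_nonneg (a : nat -> R) (B : R) :
  (forall k, 0 <= a k) -> (forall N, sum_f_R0 a N <= B) ->
  exists l : R, is_series a l /\ l <= B.
Proof.
  intros Hpos HB.
  assert (Hgrow : Un_growing (sum_f_R0 a)) by (intro N; simpl; specialize (Hpos (S N)); lra).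
  destruct (growing_cv _ Hgrow) as [l Hl].
  { exists B; intros x [N ->]; apply HB. }
  exists l; split; [apply is_series_Reals, Hl|].
  apply Rnot_lt_le; intro HlB.
  destruct (Hl (l - B)) as [N HN]; [lra|].
  specialize (HN N (le_n N)); specialize (HB N).
  unfold Rdist in HN; apply Rabs_def2 in HN; lra.
Qed.

Lemma inv_sq_le_telescope x : 0 < x -> 1 / (x + 1) ^ 2 <= 1 / x - 1 / (x + 1).
Proof.
  intro Hx.
  replace (1 / x - 1 / (x + 1)) with (1 / (x * (x + 1))) by (field; lra).
  apply Rmult_le_compat_l; [lra|]; apply Rinv_le_contravar; [nra|]; simpl; nra.
Qed.

Lemma psum_two_regimes (a : nat -> R) (K : nat) (A B : R) :
  (2 <= K)%nat -> 0 <= A -> 0 <= B ->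
  (forall k, (k < K)%nat -> a k <= B) ->
  (forall k, (K <= k)%nat -> a k <= A / INR k ^ 2) ->
  forall N, sum_f_R0 a N <= INR K * B + A / (INR K - 1).
Proof.
  intros HK HA HB Hnear Hfar.
  destruct K as [|K0]; [lia|]; rewrite S_INR; replace (INR K0 + 1 - 1) with (INR K0) by ring.
  assert (HK0 : 1 <= INR K0) by (apply (le_INR 1); lia).
  assert (Hhead : forall N, (N <= K0)%nat -> sum_f_R0 a N <= INR (S N) * B).
  { induction N as [|N IH]; intro HN; simpl sum_f_R0.
    - specialize (Hnear 0%nat ltac:(lia)); simpl; lra.
    - specialize (IH ltac:(lia)); specialize (Hnear (S N) ltac:(lia)).
      rewrite (S_INR (S N)); lra. }
  assert (Htail : forall d, sum_f_R0 a (K0 + d)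
                    <= (INR K0 + 1) * B + A * (1 / INR K0 - 1 / INR (K0 + d))).
  { induction d as [|d IH].
    - rewrite Nat.add_0_r, Rminus_diag, Rmult_0_r, Rplus_0_r, <- S_INR; apply Hhead; lia.
    - rewrite Nat.add_succ_r; simpl sum_f_R0.
      specialize (Hfar (S (K0 + d)) ltac:(lia)).
      assert (0 < INR (K0 + d)) by (apply lt_0_INR; lia).
      pose proof (inv_sq_le_telescope (INR (K0 + d)) ltac:(lra)) as Htel.
      rewrite S_INR in Hfar |- *.
      replace (A / (INR (K0 + d) + 1) ^ 2) with (A * (1 / (INR (K0 + d) + 1) ^ 2))
        in Hfar by (field; lra).
      pose proof (Rmult_le_compat_l A _ _ HA Htel); lra. }
  intro N; destruct (Nat.le_gt_cases N K0) as [HN|HN].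
  - specialize (Hhead N HN); apply le_INR in HN.
    assert (0 <= A / INR K0) by (apply Rdiv_le_0_compat; lra).
    rewrite S_INR in Hhead; nra.
  - replace N with (K0 + (N - K0))%nat by lia; specialize (Htail (N - K0)%nat).
    assert (0 < INR (K0 + (N - K0))) by (apply lt_0_INR; lia).
    assert (0 <= A * (1 / INR (K0 + (N - K0))))
      by (apply Rmult_le_pos; [lra | apply Rlt_le, Rdiv_lt_0_compat; lra]).
    replace (A / INR K0) with (A * (1 / INR K0)) by (field; lra); lra.
Qed.

Lemma is_series_tail (a : nat -> R) (l : R) N : is_series a l ->
  is_series (fun k => if Nat.ltb k (S N) then 0 else a k) (l - sum_f_R0 a N).
Proof.
  intro Ha; apply (is_series_decr_n _ (S N)); [lia|].
  match goal with |- is_series _ ?x => replace x with (l - sum_f_R0 a N) end.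
  2: { rewrite sum_n_Reals, (sum_eq_R0 (fun k => if Nat.ltb k (S N) then 0 else a k)).
       - unfold plus, opp; simpl; ring.
       - intros k Hk; replace (Nat.ltb k (S N)) with true by (symmetry; apply Nat.ltb_lt; lia).
         reflexivity. }
  eapply is_series_ext; [|apply (is_series_incr_n a (S N)); [lia|]].
  - intro k; cbv beta.
    replace (Nat.ltb (S N + k) (S N)) with false by (symmetry; apply Nat.ltb_ge; lia).
    reflexivity.
  - match goal with |- is_series _ ?x => replace x with l; [exact Ha|] end.
    rewrite sum_n_Reals; unfold plus; simpl; ring.
Qed.

Lemma is_series_Cmod2_add (x y : nat -> C) (lx ly : R) :
  is_series (fun k => Cmod (x k) ^ 2) lx -> is_series (fun k => Cmod (y k) ^ 2) ly ->
  exists l : R, is_series (fun k => Cmod (Cplus (x k) (y k)) ^ 2) l /\ l <= 2 * lx + 2 * ly.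
Proof.
  intros Hx Hy.
  assert (Hsum : is_series (fun k => 2 * Cmod (x k) ^ 2 + 2 * Cmod (y k) ^ 2)
                           (2 * lx + 2 * ly)).
  { apply (is_series_plus (fun k => 2 * Cmod (x k) ^ 2) (fun k => 2 * Cmod (y k) ^ 2));
      [apply (is_series_scal_l 2 (fun k => Cmod (x k) ^ 2)) |
       apply (is_series_scal_l 2 (fun k => Cmod (y k) ^ 2))]; assumption. }
  apply is_series_bounded_nonneg; [intro; apply pow2_ge_0|]; intro N.
  apply Rle_trans with (sum_f_R0 (fun k => 2 * Cmod (x k) ^ 2 + 2 * Cmod (y k) ^ 2) N).
  - apply sum_Rle; intros k _.
    pose proof (Cmod_triangle (x k) (y k)); pose proof (Cmod_ge_0 (Cplus (x k) (y k))).
    pose proof (Cmod_ge_0 (x k)); pose proof (Cmod_ge_0 (y k)).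
    assert (Cmod (Cplus (x k) (y k)) ^ 2 <= (Cmod (x k) + Cmod (y k)) ^ 2)
      by (apply pow_incr; lra).
    pose proof (pow2_ge_0 (Cmod (x k) - Cmod (y k))); nra.
  - apply sum_incr; [apply is_series_Reals, Hsum|].
    intro k; pose proof (pow2_ge_0 (Cmod (x k))); pose proof (pow2_ge_0 (Cmod (y k))); lra.
Qed.

(** * Zeta kernels and trigonometric polynomials *)

Definition cis (x : R) : C := (cos x, sin x).

Lemma cis_add x y : cis (x + y) = Cmult (cis x) (cis y).
Proof.
  unfold cis; apply injective_projections; simpl;
    [rewrite cos_plus | rewrite sin_plus]; ring.
Qed.

Lemma cis_0 : cis 0 = RtoC 1.
Proof. unfold cis, RtoC; rewrite cos_0, sin_0; reflexivity. Qed.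

Definition freq (n : nat) (a : Q) : R := PI * Q2R a / ln (INR n).

Lemma freq_add n a b : freq n (a + b) = freq n a + freq n b.
Proof. unfold freq; rewrite Qreals.Q2R_plus; unfold Rdiv; ring. Qed.

Lemma freq_opp n a : freq n (- a) = - freq n a.
Proof. unfold freq; rewrite Qreals.Q2R_opp; unfold Rdiv; ring. Qed.

Lemma freq_0 n : freq n 0 = 0.
Proof. unfold freq, Q2R; simpl; unfold Rdiv; ring. Qed.

Lemma cpow_pos_imag x t : cpow_pos x (0, t) = cis (t * ln x).
Proof.
  unfold cpow_pos, cis; simpl.
  unfold Rpower; rewrite Rmult_0_l, exp_0, !Rmult_1_l; reflexivity.
Qed.

Lemma kappa_s_na n a k :
  kappa (s_na n a) k =
  Cmult (Copp (Cinv (1, - freq n a)))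
    (Cminus (cis (freq n a * ln (INR (S k))))
            (match k with O => RtoC 0 | _ => cis (freq n a * ln (INR k)) end)).
Proof.
  assert (E : Cminus (RtoC 1) (Cconj (s_na n a)) = (0, freq n a)).
  { unfold Cminus, Cplus, Copp, Cconj, RtoC, s_na; simpl.
    apply injective_projections; simpl; [ring | unfold freq; ring]. }
  unfold kappa; destruct k as [|k].
  - simpl phi; rewrite INR_1, ln_1, Rmult_0_r, cis_0.
    unfold Cconj, s_na; simpl; fold (freq n a).
    apply injective_projections; simpl; ring.
  - unfold phi; rewrite E, !cpow_pos_imag.
    unfold Cconj, s_na; simpl; fold (freq n a); reflexivity.
Qed.

Definition trig_poly (n : nat) (T : list (C * Q)) (y : R) : C :=
  fold_right (fun p acc => Cplus (Cmult (fst p) (cis (freq n (snd p) * y))) acc)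
             (RtoC 0) T.

(* The factor [-(1 - i t)] cancels the prefactor [-1 / conj s] of [phi_k]. *)
Definition kernel_combination (n : nat) (T : list (C * Q)) : list (C * Q) :=
  map (fun p => (Cmult (Copp (1, - freq n (snd p))) (fst p), snd p)) T.

Lemma lincomb_kernel_combination n T k :
  lincomb n (kernel_combination n T) k =
  Cminus (trig_poly n T (ln (INR (S k))))
         (match k with O => RtoC 0 | _ => trig_poly n T (ln (INR k)) end).
Proof.
  induction T as [|[c a] T IH].
  - destruct k; simpl; apply injective_projections; simpl; ring.
  - change (lincomb n (kernel_combination n ((c, a) :: T)) k) with
      (Cplus (Cmult (Cmult (Copp (1, - freq n a)) c) (kappa (s_na n a) k))
             (lincomb n (kernel_combination n T) k)).
    assert (Hs : (1, - freq n a) <> RtoC 0) by (intro H; injection H; lra).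
    rewrite IH, kappa_s_na; destruct k; simpl; field; exact Hs.
Qed.

Definition mul_terms (T1 T2 : list (C * Q)) : list (C * Q) :=
  flat_map (fun p => map (fun q => (Cmult (fst p) (fst q), Qplus (snd p) (snd q))) T2) T1.

Fixpoint pow_terms (T : list (C * Q)) (j : nat) : list (C * Q) :=
  match j with
  | O => (RtoC 1, 0%Q) :: nil
  | S j => mul_terms T (pow_terms T j)
  end.

Lemma trig_poly_app n T1 T2 y :
  trig_poly n (T1 ++ T2) y = Cplus (trig_poly n T1 y) (trig_poly n T2 y).
Proof.
  induction T1 as [|p T1 IH]; simpl.
  - rewrite Cplus_0_l; reflexivity.
  - unfold trig_poly in *; simpl; rewrite IH, Cplus_assoc; reflexivity.
Qed.

Lemma trig_poly_shift n c a T y :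
  trig_poly n (map (fun q => (Cmult c (fst q), Qplus a (snd q))) T) y
  = Cmult (Cmult c (cis (freq n a * y))) (trig_poly n T y).
Proof.
  induction T as [|[d b] T IH]; unfold trig_poly in *; simpl.
  - apply injective_projections; simpl; ring.
  - rewrite IH, freq_add, Rmult_plus_distr_r, cis_add; ring.
Qed.

Lemma trig_poly_mul n T1 T2 y :
  trig_poly n (mul_terms T1 T2) y = Cmult (trig_poly n T1 y) (trig_poly n T2 y).
Proof.
  induction T1 as [|[c a] T1 IH].
  - apply injective_projections; simpl; ring.
  - unfold mul_terms in *; simpl flat_map.
    rewrite trig_poly_app, IH, trig_poly_shift; unfold trig_poly; simpl; ring.
Qed.

Lemma trig_poly_pow n T y r j :
  trig_poly n T y = RtoC r -> trig_poly n (pow_terms T j) y = RtoC (r ^ j).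
Proof.
  intro HT; induction j as [|j IH]; simpl.
  - unfold trig_poly; simpl; rewrite freq_0, Rmult_0_l, cis_0.
    apply injective_projections; simpl; ring.
  - rewrite trig_poly_mul, IH, HT, RtoC_mult; reflexivity.
Qed.

Definition bump_terms (n : nat) (b : Q) (y0 : R) : list (C * Q) :=
  (RtoC (1/2), 0%Q) ::
  (Cmult (RtoC (1/4)) (cis (- freq n b * y0)), b) ::
  (Cmult (RtoC (1/4)) (cis (freq n b * y0)), Qopp b) :: nil.

Lemma trig_poly_bump_terms n b y0 y :
  trig_poly n (bump_terms n b y0) y = RtoC ((1 + cos (freq n b * (y - y0))) / 2).
Proof.
  unfold trig_poly, bump_terms; simpl.
  rewrite freq_0, freq_opp, Rmult_0_l, cis_0, <- !Cmult_assoc, <- !cis_add.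
  replace (- freq n b * y0 + freq n b * y) with (freq n b * (y - y0)) by ring.
  replace (freq n b * y0 + - freq n b * y) with (- (freq n b * (y - y0))) by ring.
  unfold cis; rewrite cos_neg, sin_neg.
  apply injective_projections; simpl; field.
Qed.

(** * The bump *)

Definition bump (beta y0 : R) (M : nat) (y : R) : R :=
  ((1 + cos (beta * (y - y0))) / 2) ^ M.

(* The sample at [k = 0] is [0], not the junk value [g (ln 0) = g 0]. *)
Definition sample_ln (g : R -> R) (k : nat) : R :=
  match k with O => 0 | _ => g (ln (INR k)) end.

Lemma lincomb_bump n b y0 M k :
  lincomb n (kernel_combination n (pow_terms (bump_terms n b y0) M)) k =
  RtoC (sample_ln (bump (freq n b) y0 M) (S k) - sample_ln (bump (freq n b) y0 M) k).
Proof.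
  rewrite lincomb_kernel_combination, RtoC_minus; unfold sample_ln, bump.
  destruct k; rewrite !(trig_poly_pow _ _ _ _ M (trig_poly_bump_terms _ _ _ _));
    reflexivity.
Qed.

Lemma bump_range beta y0 M y : 0 <= bump beta y0 M y <= 1.
Proof.
  pose proof (COS_bound (beta * (y - y0))).
  apply pow_unit_interval; lra.
Qed.

Lemma bump_center beta y0 M : bump beta y0 M y0 = 1.
Proof.
  unfold bump; rewrite Rminus_diag, Rmult_0_r, cos_0.
  replace ((1 + 1) / 2) with 1 by field; apply pow1.
Qed.

Lemma bump_lipschitz beta y0 M y z : 0 <= beta ->
  Rabs (bump beta y0 M y - bump beta y0 M z) <= INR M * beta / 2 * Rabs (y - z).
Proof.
  intro Hb; unfold bump.
  set (u := beta * (y - y0)); set (v := beta * (z - y0)).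
  pose proof (COS_bound u); pose proof (COS_bound v).
  eapply Rle_trans; [apply pow_lipschitz; lra|].
  replace ((1 + cos u) / 2 - (1 + cos v) / 2) with ((cos u - cos v) * / 2) by field.
  rewrite Rabs_mult, (Rabs_pos_eq (/ 2)) by lra.
  pose proof (cos_lipschitz u v) as Hc; pose proof (pos_INR M).
  replace (u - v) with (beta * (y - z)) in Hc by (unfold u, v; ring).
  rewrite Rabs_mult, (Rabs_pos_eq beta) in Hc by lra.
  pose proof (Rabs_pos (cos u - cos v)); pose proof (Rabs_pos (y - z)); nra.
Qed.

Lemma bump_le_off_peak beta y0 M y th :
  0 <= th <= Rabs (beta * (y - y0)) -> Rabs (beta * (y - y0)) <= PI ->
  bump beta y0 M y <= ((1 + cos th) / 2) ^ M.
Proof.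
  intros Hth Hpi; unfold bump.
  assert (Hcos : cos (beta * (y - y0)) = cos (Rabs (beta * (y - y0)))).
  { destruct (Rcase_abs (beta * (y - y0))).
    - rewrite Rabs_left, cos_neg by lra; reflexivity.
    - rewrite Rabs_pos_eq by lra; reflexivity. }
  pose proof (COS_bound (beta * (y - y0))).
  apply pow_incr; split; [lra|].
  rewrite Hcos; pose proof (cos_decr_1 th (Rabs (beta * (y - y0)))); lra.
Qed.

Definition kron (m k : nat) : R := if Nat.eqb k m then 1 else 0.

Section BumpResidual.

Variables (beta : R) (m M K : nat).
Hypotheses (beta_ge0 : 0 <= beta) (K_large : (S (S m) <= K)%nat)
  (beta_lnK : beta * ln (INR K) <= PI).

(* The coefficients of [e_m - e_(m+1)] minus those of the kernel combination of
   the bump are [residual (S k) - residual k], because [kron m k = kron (S m) (S k)]. *)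
Definition residual (j : nat) : R :=
  kron (S m) j - sample_ln (bump beta (ln (INR (S m))) M) j.

Definition off_peak : R := (1 + cos (beta / (INR m + 2))) / 2.

Lemma off_peak_pow_ge0 : 0 <= off_peak ^ M.
Proof.
  apply pow_le; unfold off_peak; pose proof (COS_bound (beta / (INR m + 2))); lra.
Qed.

Lemma residual_near j : (j <= K)%nat -> - off_peak ^ M <= residual j <= 0.
Proof.
  intro HjK; pose proof off_peak_pow_ge0.
  unfold residual, kron, sample_ln; destruct j as [|j]; [simpl; lra|].
  destruct (Nat.eqb_spec (S j) (S m)) as [E|E].
  - injection E as ->; rewrite bump_center; lra.
  - set (u := ln (INR (S j)) - ln (INR (S m))).
    assert (Hsep : 1 / (INR m + 2) <= Rabs u) by (apply ln_nat_separated; lia).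
    assert (Hu : Rabs u <= ln (INR K)).
    { assert (forall i, (1 <= i <= K)%nat -> 0 <= ln (INR i) <= ln (INR K)) as Hr.
      { intros i Hi; assert (1 <= INR i <= INR K) as []
          by (split; [apply (le_INR 1) | apply le_INR]; lia).
        rewrite <- ln_1; split; apply ln_le; lra. }
      pose proof (Hr (S j) ltac:(lia)); pose proof (Hr (S m) ltac:(lia)).
      apply Rabs_le; unfold u; lra. }
    pose proof (pos_INR m).
    assert (Hth : beta / (INR m + 2) <= Rabs (beta * u)).
    { rewrite Rabs_mult, (Rabs_pos_eq beta) by lra.
      replace (beta / (INR m + 2)) with (beta * (1 / (INR m + 2))) by (field; lra).
      apply Rmult_le_compat_l; lra. }
    assert (Hpi : Rabs (beta * u) <= PI).
    { rewrite Rabs_mult, (Rabs_pos_eq beta) by lra.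
      eapply Rle_trans; [apply Rmult_le_compat_l; [lra | exact Hu] | exact beta_lnK]. }
    assert (0 <= beta / (INR m + 2)) by (apply Rdiv_le_0_compat; lra).
    pose proof (bump_range beta (ln (INR (S m))) M (ln (INR (S j)))).
    pose proof (bump_le_off_peak beta (ln (INR (S m))) M (ln (INR (S j)))
                  (beta / (INR m + 2)) ltac:(split; assumption) Hpi).
    unfold off_peak; lra.
Qed.

Lemma residual_step_far k : (K <= k)%nat ->
  Rabs (residual (S k) - residual k) <= INR M * beta / 2 / INR k.
Proof.
  intro Hk; destruct k as [|k]; [lia|].
  unfold residual, kron, sample_ln.
  replace (Nat.eqb (S (S k)) (S m)) with false by (symmetry; apply Nat.eqb_neq; lia).
  replace (Nat.eqb (S k) (S m)) with false by (symmetry; apply Nat.eqb_neq; lia).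
  replace (0 - bump beta (ln (INR (S m))) M (ln (INR (S (S k))))
           - (0 - bump beta (ln (INR (S m))) M (ln (INR (S k)))))
    with (bump beta (ln (INR (S m))) M (ln (INR (S k)))
          - bump beta (ln (INR (S m))) M (ln (INR (S (S k))))) by ring.
  eapply Rle_trans; [apply bump_lipschitz; exact beta_ge0|].
  pose proof (ln_succ_sub_le (S k) ltac:(lia)).
  rewrite Rabs_minus_sym, Rabs_pos_eq by lra.
  pose proof (pos_INR M).
  replace (INR M * beta / 2 / INR (S k)) with (INR M * beta / 2 * (1 / INR (S k)))
    by (field; apply not_0_INR; lia).
  apply Rmult_le_compat_l; [apply Rmult_le_pos; [apply Rmult_le_pos|]|]; lra.
Qed.

Lemma residual_steps_series :
  exists l : R, is_series (fun k => (residual (S k) - residual k) ^ 2) l /\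
    l <= INR K * (off_peak ^ M) ^ 2 + (INR M * beta / 2) ^ 2 / (INR K - 1).
Proof.
  apply is_series_bounded_nonneg; [intro; apply pow2_ge_0|].
  pose proof off_peak_pow_ge0.
  apply psum_two_regimes; try lia; try apply pow2_ge_0.
  - intros k Hk; pose proof (residual_near k ltac:(lia)).
    pose proof (residual_near (S k) ltac:(lia)).
    rewrite <- pow2_abs; apply pow_incr; split; [apply Rabs_pos|].
    apply Rabs_le; lra.
  - intros k Hk; assert (0 < INR k) by (apply lt_0_INR; lia).
    replace ((INR M * beta / 2) ^ 2 / INR k ^ 2) with ((INR M * beta / 2 / INR k) ^ 2)
      by (field; lra).
    rewrite <- pow2_abs; apply pow_incr; split; [apply Rabs_pos|].
    apply residual_step_far; exact Hk.
Qed.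

End BumpResidual.

(** * Choice of parameters *)

Section ParameterChoice.

Variables (n m : nat).
Hypothesis n_ge2 : (2 <= n)%nat.

Lemma ln_nat_gt_half : / 2 < ln (INR n).
Proof.
  pose proof ln_lt_2; assert (2 <= INR n) by (apply (le_INR 2); exact n_ge2).
  pose proof (ln_le 2 (INR n) ltac:(lra) ltac:(lra)); lra.
Qed.

Lemma INR_pow_exp p : INR (n ^ p) = exp (INR p * ln (INR n)).
Proof.
  rewrite pow_INR, <- exp_pow, exp_ln; [reflexivity|].
  apply lt_0_INR; lia.
Qed.

Definition bump_freq (p : nat) : R := PI / (INR p * ln (INR n)).

(* [M = p^3 Q] makes the near part [n^p off_peak^(2M)] decay like [exp (-p)], as
   [1 - off_peak] is of order [1/p^2]; the far part [(M beta)^2 / n^p] stays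
   [O(1/p)] because [n^p] outgrows [p^5]. *)
Lemma near_term_le p Q : (1 <= p)%nat -> PI <= INR p * ln (INR n) ->
  8 * ln (INR n) ^ 2 * (INR m + 2) ^ 2 * (ln (INR n) + 1) / PI ^ 2 <= INR Q ->
  INR (n ^ p) * (off_peak (bump_freq p) m ^ (p ^ 3 * Q)) ^ 2 <= 1 / INR p.
Proof.
  unfold bump_freq; intros Hp HpL HQ.
  pose proof ln_nat_gt_half; pose proof PI_RGT_0; pose proof (pos_INR m).
  set (L := ln (INR n)) in *; set (P := INR p) in *.
  assert (HP : 1 <= P) by (apply (le_INR 1); exact Hp).
  set (th := PI / (P * L) / (INR m + 2)).
  assert (Hth : 0 <= th <= 1).
  { unfold th; split; [repeat apply Rdiv_le_0_compat; nra|].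
    apply Rmult_le_reg_r with ((INR m + 2) * (P * L)); [nra|].
    field_simplify; nra. }
  set (u := th ^ 2 / 16).
  assert (Hu : 0 <= u <= 1) by (unfold u; split; [apply Rdiv_le_0_compat | simpl]; nra).
  set (M := (p ^ 3 * Q)%nat).
  assert (Hdecay : (off_peak (PI / (P * L)) m ^ M) ^ 2 <= exp (- (2 * INR M * u))).
  { replace (- (2 * INR M * u)) with (INR 2 * - (INR M * u)) by (simpl; ring).
    rewrite <- exp_pow; apply pow_incr; split; [apply off_peak_pow_ge0|].
    eapply Rle_trans; [apply pow_incr | apply pow_one_sub_le_exp; exact Hu].
    unfold off_peak; fold th; pose proof (COS_bound th).
    pose proof (half_one_plus_cos_le th Hth); unfold u; lra. }
  assert (Hrate : P * (L + 1) <= 2 * INR M * u).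
  { unfold u, th, M; rewrite mult_INR, pow_INR; fold P.
    replace (2 * (P ^ 3 * INR Q) * ((PI / (P * L) / (INR m + 2)) ^ 2 / 16))
      with (P * (INR Q * (PI ^ 2 / (8 * L ^ 2 * (INR m + 2) ^ 2)))) by (field; lra).
    apply Rmult_le_compat_l; [lra|].
    apply Rmult_le_reg_r with (8 * L ^ 2 * (INR m + 2) ^ 2 / PI ^ 2).
    { apply Rdiv_lt_0_compat; [|apply pow_lt; lra]; nra. }
    replace (INR Q * (PI ^ 2 / (8 * L ^ 2 * (INR m + 2) ^ 2))
             * (8 * L ^ 2 * (INR m + 2) ^ 2 / PI ^ 2))
      with (INR Q) by (field; repeat split; nra).
    replace ((L + 1) * (8 * L ^ 2 * (INR m + 2) ^ 2 / PI ^ 2))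
      with (8 * L ^ 2 * (INR m + 2) ^ 2 * (L + 1) / PI ^ 2) by (field; lra).
    exact HQ. }
  rewrite INR_pow_exp; fold L P.
  eapply Rle_trans; [apply Rmult_le_compat_l; [left; apply exp_pos | exact Hdecay]|].
  rewrite <- exp_plus.
  apply Rle_trans with (exp (- P)); [apply exp_le_compat; lra|].
  rewrite exp_Ropp; unfold Rdiv; rewrite Rmult_1_l.
  apply Rinv_le_contravar; [lra|]; pose proof (exp_ineq1_le P); lra.
Qed.

Lemma far_term_le p Q : (1 <= p)%nat ->
  (INR (p ^ 3 * Q) * bump_freq p / 2) ^ 2 / (INR (n ^ p) - 1)
  <= INR Q ^ 2 * PI ^ 2 * 5 ^ 5 / (2 * ln (INR n) ^ 7) / INR p.
Proof.
  unfold bump_freq; intros Hp; pose proof ln_nat_gt_half.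
  set (L := ln (INR n)) in *; set (P := INR p).
  assert (HP : 1 <= P) by (apply (le_INR 1); exact Hp).
  assert (Hn2 : 2 <= INR (n ^ p)).
  { apply (le_INR 2); eapply Nat.le_trans; [exact n_ge2|].
    rewrite <- (Nat.pow_1_r n) at 1; apply Nat.pow_le_mono_r; lia. }
  assert (HY : (P * L / 5) ^ 5 <= INR (n ^ p)).
  { rewrite INR_pow_exp; fold L P; replace 5 with (INR 5) at 1 by (simpl; ring).
    apply pow_div_le_exp; [nra | lia]. }
  assert (0 < (P * L / 5) ^ 5) by (apply pow_lt; nra).
  apply Rle_trans with ((INR (p ^ 3 * Q) * (PI / (P * L)) / 2) ^ 2 / ((P * L / 5) ^ 5 / 2)).
  { unfold Rdiv at 1 3; apply Rmult_le_compat_l; [apply pow2_ge_0|].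
    apply Rinv_le_contravar; lra. }
  right; rewrite mult_INR, pow_INR; fold P; field; lra.
Qed.

Lemma bump_error_small del : 0 < del ->
  exists p M, (1 <= p)%nat /\ (S (S m) <= n ^ p)%nat /\
    INR (n ^ p) * (off_peak (bump_freq p) m ^ M) ^ 2
    + (INR M * bump_freq p / 2) ^ 2 / (INR (n ^ p) - 1) < del.
Proof.
  intro Hdel; pose proof ln_nat_gt_half; pose proof PI_RGT_0; pose proof PI_4.
  destruct (INR_unbounded
              (8 * ln (INR n) ^ 2 * (INR m + 2) ^ 2 * (ln (INR n) + 1) / PI ^ 2)) as [Q HQ].
  set (c := INR Q ^ 2 * PI ^ 2 * 5 ^ 5 / (2 * ln (INR n) ^ 7)).
  assert (Hc : 0 <= c).
  { unfold c; apply Rdiv_le_0_compat; [|apply Rmult_lt_0_compat; [lra | apply pow_lt; lra]].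
    pose proof (pos_INR Q); pose proof (pow2_ge_0 (INR Q)); pose proof (pow2_ge_0 PI).
    apply Rmult_le_pos; [apply Rmult_le_pos|]; lra. }
  destruct (INR_unbounded ((1 + c) / del + INR m + 8)) as [p Hp].
  assert (0 <= (1 + c) / del) by (apply Rdiv_le_0_compat; lra).
  pose proof (pos_INR m).
  assert (Hp1 : (1 <= p)%nat) by (apply INR_le; simpl; lra).
  assert (Hmp : (S (S m) <= p)%nat) by (apply INR_le; rewrite !S_INR; lra).
  exists p, (p ^ 3 * Q)%nat; split; [exact Hp1|]; split.
  { pose proof (Nat.pow_gt_lin_r n p ltac:(lia)); lia. }
  pose proof (near_term_le p Q Hp1 ltac:(nra) ltac:(lra)) as Hnear.
  pose proof (far_term_le p Q Hp1) as Hfar; fold c in Hfar.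
  assert (Hsmall : (1 + c) / INR p < del).
  { apply Rmult_lt_reg_r with (INR p / del); [apply Rdiv_lt_0_compat; lra|].
    replace ((1 + c) / INR p * (INR p / del)) with ((1 + c) / del) by (field; lra).
    replace (del * (INR p / del)) with (INR p) by (field; lra); lra. }
  replace ((1 + c) / INR p) with (1 / INR p + c / INR p) in Hsmall by (field; lra).
  lra.
Qed.

End ParameterChoice.

(** * Approximation by kernels *)

Definition approximable (n : nat) (g : nat -> C) : Prop :=
  forall eps, 0 < eps -> exists L (l : R),
    is_series (fun k => Cmod (Cminus (g k) (lincomb n L k)) ^ 2) l /\ l < eps.

Definition scale_coeffs (c : C) (L : list (C * Q)) : list (C * Q) :=
  map (fun p => (Cmult c (fst p), snd p)) L.

Lemma lincomb_app n L1 L2 k :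
  lincomb n (L1 ++ L2) k = Cplus (lincomb n L1 k) (lincomb n L2 k).
Proof.
  induction L1 as [|p L1 IH]; [symmetry; apply Cplus_0_l|].
  unfold lincomb in *; simpl; rewrite IH; ring.
Qed.

Lemma lincomb_scale n c L k : lincomb n (scale_coeffs c L) k = Cmult c (lincomb n L k).
Proof.
  induction L as [|p L IH].
  - apply injective_projections; simpl; ring.
  - unfold lincomb, scale_coeffs in *; simpl; rewrite IH; ring.
Qed.

Section Approximable.

Variable n : nat.

Lemma approximable_ext g h : (forall k, g k = h k) -> approximable n g -> approximable n h.
Proof.
  intros E Hg eps Heps; destruct (Hg eps Heps) as [L [l [Hl Hlt]]].
  exists L, l; split; [|exact Hlt].
  eapply is_series_ext; [|exact Hl]; intro k; cbv beta; rewrite E; reflexivity.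
Qed.

Lemma approximable_lincomb L : approximable n (lincomb n L).
Proof.
  intros eps Heps; exists L.
  destruct (is_series_bounded_nonneg
              (fun k => Cmod (Cminus (lincomb n L k) (lincomb n L k)) ^ 2) 0) as [l [Hl Hle]].
  - intro k; apply pow2_ge_0.
  - intro N; rewrite sum_eq_R0; [apply Rle_refl|].
    intros k _; unfold Cminus; rewrite Cplus_opp_r, Cmod_0; simpl; ring.
  - exists l; split; [exact Hl | lra].
Qed.

Lemma approximable_add g h :
  approximable n g -> approximable n h -> approximable n (fun k => Cplus (g k) (h k)).
Proof.
  intros Hg Hh eps Heps.
  destruct (Hg (eps / 4) ltac:(lra)) as [L1 [l1 [Hl1 Hlt1]]].
  destruct (Hh (eps / 4) ltac:(lra)) as [L2 [l2 [Hl2 Hlt2]]].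
  destruct (is_series_Cmod2_add _ _ _ _ Hl1 Hl2) as [l [Hl Hle]].
  exists (L1 ++ L2), l; split; [|lra].
  eapply is_series_ext; [|exact Hl]; intro k; rewrite lincomb_app.
  f_equal; f_equal; unfold Cminus; ring.
Qed.

Lemma approximable_scale c g : approximable n g -> approximable n (fun k => Cmult c (g k)).
Proof.
  intros Hg eps Heps; pose proof (pow2_ge_0 (Cmod c)); set (s := Cmod c ^ 2) in *.
  destruct (Hg (eps / (s + 1))) as [L [l [Hl Hlt]]]; [apply Rdiv_lt_0_compat; lra|].
  exists (scale_coeffs c L), (s * l); split.
  - eapply is_series_ext; [|exact (is_series_scal_l s _ _ Hl)]; intro k.
    rewrite lincomb_scale.
    replace (Cminus (Cmult c (g k)) (Cmult c (lincomb n L k)))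
      with (Cmult c (Cminus (g k) (lincomb n L k))) by ring.
    rewrite Cmod_mult; unfold s, scal; simpl; unfold mult; simpl; ring.
  - apply Rle_lt_trans with (s * (eps / (s + 1))).
    + apply Rmult_le_compat_l; lra.
    + replace (s * (eps / (s + 1))) with (eps - eps / (s + 1)) by (field; lra).
      assert (0 < eps / (s + 1)) by (apply Rdiv_lt_0_compat; lra); lra.
Qed.

Lemma approximable_of_close f :
  (forall eps, 0 < eps -> exists g (l : R), approximable n g /\
     is_series (fun k => Cmod (Cminus (f k) (g k)) ^ 2) l /\ l < eps) ->
  approximable n f.
Proof.
  intros Hclose eps Heps.
  destruct (Hclose (eps / 4) ltac:(lra)) as [g [l1 [Hg [Hl1 Hlt1]]]].
  destruct (Hg (eps / 4) ltac:(lra)) as [L [l2 [Hl2 Hlt2]]].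
  destruct (is_series_Cmod2_add _ _ _ _ Hl1 Hl2) as [l [Hl Hle]].
  exists L, l; split; [|lra].
  eapply is_series_ext; [|exact Hl]; intro k; cbv beta.
  f_equal; f_equal; unfold Cminus; ring.
Qed.

End Approximable.

Lemma freq_inv_nat n p : (1 <= p)%nat -> freq n (1 # Pos.of_nat p) = bump_freq n p.
Proof.
  intro Hp; unfold freq, bump_freq, Q2R; cbn [Qnum Qden].
  rewrite <- (positive_nat_Z (Pos.of_nat p)), Nat2Pos.id, <- INR_IZR_INZ by lia.
  unfold Rdiv; rewrite Rinv_mult; ring.
Qed.

Lemma unit_diff_error n b m M k :
  Cmod (Cminus (RtoC (kron m k - kron (S m) k))
               (lincomb n (kernel_combination n
                             (pow_terms (bump_terms n b (ln (INR (S m)))) M)) k)) ^ 2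
  = (residual (freq n b) m M (S k) - residual (freq n b) m M k) ^ 2.
Proof.
  rewrite lincomb_bump, <- RtoC_minus, Cmod_R, pow2_abs.
  unfold residual; replace (kron (S m) (S k)) with (kron m k) by reflexivity.
  f_equal; ring.
Qed.

Lemma approximable_unit_diff n m : (2 <= n)%nat ->
  approximable n (fun k => RtoC (kron m k - kron (S m) k)).
Proof.
  intros Hn eps Heps.
  destruct (bump_error_small n m Hn eps Heps) as [p [M [Hp [Hmp Hsmall]]]].
  set (b := (1 # Pos.of_nat p)%Q).
  assert (Hb : freq n b = bump_freq n p) by (apply freq_inv_nat; exact Hp).
  assert (Hb0 : 0 <= bump_freq n p).
  { pose proof (ln_nat_gt_half n Hn); pose proof PI_RGT_0.
    assert (1 <= INR p) by (apply (le_INR 1); exact Hp).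
    apply Rdiv_le_0_compat; nra. }
  assert (HbK : bump_freq n p * ln (INR (n ^ p)) <= PI).
  { pose proof (ln_nat_gt_half n Hn); assert (1 <= INR p) by (apply (le_INR 1); exact Hp).
    rewrite INR_pow_exp, ln_exp by exact Hn; unfold bump_freq; right; field; nra. }
  destruct (residual_steps_series (bump_freq n p) m M (n ^ p) Hb0 Hmp HbK) as [l [Hl Hle]].
  exists (kernel_combination n (pow_terms (bump_terms n b (ln (INR (S m)))) M)), l.
  split; [|lra].
  eapply is_series_ext; [|exact Hl]; intro k; rewrite unit_diff_error, Hb; reflexivity.
Qed.

Lemma lincomb_unit_vec_0 n k : lincomb n ((RtoC (-1), 0%Q) :: nil) k = RtoC (kron 0 k).
Proof.
  unfold lincomb; simpl fold_right; rewrite kappa_s_na, freq_0, !Rmult_0_l, cis_0, Ropp_0.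
  unfold kron; destruct k; simpl; apply injective_projections; simpl; field.
Qed.

Lemma approximable_unit_vec n m : (2 <= n)%nat -> approximable n (fun k => RtoC (kron m k)).
Proof.
  intro Hn; induction m as [|m IH].
  - eapply approximable_ext; [|exact (approximable_lincomb n ((RtoC (-1), 0%Q) :: nil))].
    exact (lincomb_unit_vec_0 n).
  - eapply approximable_ext;
      [|exact (approximable_add n _ _ IH
                 (approximable_scale n (RtoC (-1)) _ (approximable_unit_diff n m Hn)))].
    intro k; cbv beta; rewrite RtoC_minus.
    apply injective_projections; simpl; ring.
Qed.

Definition trunc (f : nat -> C) (N k : nat) : C := if Nat.ltb k N then f k else RtoC 0.

Lemma approximable_trunc n f N : (2 <= n)%nat -> approximable n (trunc f N).
Proof.
  intro Hn; induction N as [|N IH].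
  - eapply approximable_ext; [|exact (approximable_lincomb n nil)].
    intro k; reflexivity.
  - eapply approximable_ext;
      [|exact (approximable_add n _ _ IH
                 (approximable_scale n (f N) _ (approximable_unit_vec n N Hn)))].
    intro k; unfold trunc, kron.
    destruct (Nat.ltb_spec k N), (Nat.ltb_spec k (S N)), (Nat.eqb_spec k N);
      try lia; subst; apply injective_projections; simpl; ring.
Qed.

Lemma trunc_error_small f : inH2 f -> forall eps, 0 < eps ->
  exists N (l : R), is_series (fun k => Cmod (Cminus (f k) (trunc f N k)) ^ 2) l /\ l < eps.
Proof.
  intros [lf Hlf] eps Heps.
  destruct (proj1 (is_series_Reals _ lf) Hlf eps Heps) as [N0 HN0].
  specialize (HN0 N0 (le_n N0)); unfold Rdist in HN0; apply Rabs_def2 in HN0.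
  exists (S N0), (lf - sum_f_R0 (fun k => Cmod (f k) ^ 2) N0); split; [|lra].
  eapply is_series_ext; [|exact (is_series_tail _ _ N0 Hlf)].
  intro k; unfold trunc; destruct (Nat.ltb k (S N0)); unfold Cminus.
  - rewrite Cplus_opp_r, Cmod_0; simpl; ring.
  - rewrite Copp_0, Cplus_0_r; reflexivity.
Qed.

Lemma approximable_H2 n f : (2 <= n)%nat -> inH2 f -> approximable n f.
Proof.
  intros Hn Hf; apply approximable_of_close; intros eps Heps.
  destruct (trunc_error_small f Hf eps Heps) as [N [l [Hl Hlt]]].
  exists (trunc f N), l; repeat split; [|exact Hl | exact Hlt].
  apply approximable_trunc; exact Hn.
Qed.

Theorem mainTheorem14 (n : nat) (hn : (2 <= n)%nat) :
  forall f : nat -> C, inH2 f ->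
  forall eps : R, 0 < eps ->
  exists (L : list (C * Q)) (l : R),
    is_series (fun k => (Cmod (Cminus (f k) (lincomb n L k)))^2) l /\
    sqrt l < eps.
Proof.
  intros f Hf eps Heps.
  destruct (approximable_H2 n f hn Hf (eps ^ 2) (pow_lt eps 2 Heps)) as [L [l [Hl Hlt]]].
  exists L, l; split; [exact Hl|].
  destruct (Rle_or_lt l 0) as [Hneg | Hpos].
  - rewrite sqrt_neg_0; assumption.
  - rewrite <- (sqrt_pow2 eps) by lra; apply sqrt_lt_1_alt; lra.
Qed.
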